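(* Let $f(n)=\sum_{k=0}^n(-1)^k\binom nk C_k\binom{2n-2k}{n-k}$ for integers $n\ge 0$. Then for all integers $n\ge 2$, $$-16(2n+1)(n-1)^2f(n-2)-4(2n^2-1)f(n-1)+(2n-1)(n+1)^2f(n)=0.$$
   Context: $C_k=\binom{2k}{k}\frac{1}{k+1}$ denotes the $k$-th Catalan number. *)

From mathcomp Require Import all_boot all_order all_algebra.
Set Implicit Arguments. Unset Strict Implicit. Unset Printing Implicit Defensive.
Import GRing.Theory Num.Theory.
Local Open Scope ring_scope.

(* k-th Catalan number C_k = binom(2k,k)/(k+1) (exact division in nat). *)
Definition catalan (k : nat) : nat := ('C(2 * k, k) %/ k.+1)%N.

Definition f (n : nat) : int :=
  \sum_(0 <= k < n.+1)
    (-1) ^+ k * ('C(n, k) * catalan k * 'C(2 * n - 2 * k, n - k))%N%:Z.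

From mathcomp Require Import all_boot all_order all_algebra.
From mathcomp Require Import ring lra zify.
Import GRing.Theory Num.Theory.
Local Open Scope ring_scope.

(* Creative telescoping.  The summand t(n,k) of f(n) is hypergeometric in both
   n and k, so with L the recurrence operator, L t(n,k) is a rational multiple
   of t(n,k).  Zeilberger's algorithm yields a certificate G(n,k), a rational
   multiple of t(n,k), with L t(n,k) = G(n,k+1) - G(n,k).  Summing over k
   telescopes to G(n,n+1) - G(n,0), and both vanish: t(n,n+1) = 0 and the
   certificate's polynomial factor is divisible by k. *)

Lemma catalan_factE k : (catalan k * k.+1`! * k`! = (2 * k)`!)%N.
Proof.
rewrite /catalan; have -> : (2 * k = k + k)%N by lia.
have binS : ('C(k + k, k) = k.+1 * ('C(k + k, k) - 'C(k + k, k.+1)))%N.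
  by rewrite mulnBr (mul_bin_left (k + k) k) addnK -mulnBl subSnn mul1n.
rewrite {1}binS mulKn // factS -(bin_fact (leq_addl k k)) addnK.
by rewrite {2}binS; ring.
Qed.

Definition f_summand (n k : nat) : int :=
  (-1) ^+ k * ('C(n, k) * catalan k * 'C(2 * n - 2 * k, n - k))%N%:Z.

Definition t (n k : nat) : rat := (f_summand n k)%:~R.

Lemma t_eq0 n k : (n < k)%N -> t n k = 0.
Proof. by move=> ltnk; rewrite /t /f_summand bin_small // !mul0n mulr0. Qed.

Lemma f_ratE_widen p n : (n < p)%N -> ((f n)%:~R : rat) = \sum_(0 <= k < p) t n k.
Proof.
move=> ltnp; rewrite /f rmorph_sum (@big_cat_nat _ _ _ n.+1 0 p) //=.
rewrite [X in _ = _ + X]big1_seq ?addr0 // => k /andP[_].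
by rewrite mem_iota => /andP[ltnk _]; apply: t_eq0.
Qed.

Lemma fact_neq0 (R : numDomainType) m : (m`!%:R : R) != 0.
Proof. by rewrite pnatr_eq0 -lt0n fact_gt0. Qed.

Lemma natr_odd_sub_even_neq0 (R : numDomainType) m j :
  (2 * m%:R + 1 - 2 * j%:R : R) != 0.
Proof.
rewrite subr_eq0 -[2]/(2%N%:R) -!natrM natr1 eqr_nat.
by apply/eqP; lia.
Qed.

(* Factorial form of t on its support n = a + b, k = a. *)
Definition t_fact (a b : nat) : rat :=
  (-1) ^+ a * ((a + b)`!%:R * (2 * a)`!%:R * (2 * b)`!%:R) /
  (a`!%:R ^+ 2 * a.+1`!%:R * b`!%:R ^+ 3).

Lemma natr_fact_quotient (F : numFieldType) m p q r :
  (m * p`! * q`! = r)%N -> (m%:R : F) = r%:R / (p`!%:R * q`!%:R).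
Proof. by move=> <-; rewrite !natrM -(mulrA m%:R) mulfK // mulf_neq0 ?fact_neq0. Qed.

Lemma t_factE a b : t (a + b) a = t_fact a b.
Proof.
rewrite /t /f_summand rmorphM rmorphXn rmorphN rmorph1 /= -pmulrn !natrM.
have -> : (a + b - a = b)%N by lia.
have -> : (2 * (a + b) - 2 * a = 2 * b)%N by lia.
have binE : ('C(a + b, a)%:R : rat) = (a + b)`!%:R / (a`!%:R * b`!%:R).
  by apply: natr_fact_quotient; rewrite -mulnA -(bin_fact (leq_addr b a)) addKn.
have bin2E : ('C(2 * b, b)%:R : rat) = (2 * b)`!%:R / (b`!%:R * b`!%:R).
  apply: natr_fact_quotient; have -> : (2 * b = b + b)%N by lia.
  by rewrite -mulnA -(bin_fact (leq_addl b b)) addnK.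
have catE : ((catalan a)%:R : rat) = (2 * a)`!%:R / (a.+1`!%:R * a`!%:R).
  exact/natr_fact_quotient/catalan_factE.
rewrite binE bin2E catE /t_fact; field.
by rewrite !fact_neq0.
Qed.

Ltac nonzero_factors :=
  repeat (apply/andP; split); try exact: fact_neq0; try (apply: lt0r_neq0; lra).

Lemma t_fact_succ_b a b :
  2 * (a%:R + b%:R + 1) * (2 * b%:R + 1) * t_fact a b
  = (b%:R + 1) ^+ 2 * t_fact a b.+1.
Proof.
have a_ge0 : 0 <= a%:R :> rat := ler0n _ a.
have b_ge0 : 0 <= b%:R :> rat := ler0n _ b.
rewrite /t_fact addnS; have -> : (2 * b.+1 = (2 * b).+2)%N by lia.
rewrite !factS !natrM !mulrS ?natrD ?natrM.
by field; nonzero_factors.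
Qed.

Lemma t_fact_succ_a a b :
  (a%:R + 1) * (a%:R + 2) * (2 * b%:R + 1) * t_fact a.+1 b
  = - (2 * a%:R + 1) * (b%:R + 1) ^+ 2 * t_fact a b.+1.
Proof.
have a_ge0 : 0 <= a%:R :> rat := ler0n _ a.
have b_ge0 : 0 <= b%:R :> rat := ler0n _ b.
rewrite /t_fact addnS addSn; have -> : (2 * b.+1 = (2 * b).+2)%N by lia.
have -> : (2 * a.+1 = (2 * a).+2)%N by lia.
rewrite !factS !natrM !mulrS ?natrD ?natrM exprS.
by field; nonzero_factors.
Qed.

Lemma t_succ_n n k :
  2 * (n%:R + 1) * (2 * (n%:R - k%:R) + 1) * t n k
  = (n%:R - k%:R + 1) ^+ 2 * t n.+1 k.
Proof.
have [lekn | ltnk] := leqP k n.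
  have [b ->] : exists b, n = (k + b)%N by exists (n - k)%N; lia.
  rewrite t_factE -addnS t_factE natrD.
  by apply: etrans (etrans (t_fact_succ_b k b) _); ring.
have [->|neq] := eqVneq k n.+1; first by rewrite t_eq0 // mulrS; ring.
by rewrite !t_eq0 ?mulr0 //; lia.
Qed.

Lemma t_succ_k n k :
  (k%:R + 1) * (k%:R + 2) * (2 * (n%:R - k%:R) - 1) * t n k.+1
  = - (2 * k%:R + 1) * (n%:R - k%:R) ^+ 2 * t n k.
Proof.
have [ltkn | lenk] := ltnP k n.
  have [b ->] : exists b, n = (k + b.+1)%N by exists (n - k.+1)%N; lia.
  rewrite t_factE -addSnnS t_factE !natrD mulrS.
  by apply: etrans (etrans (t_fact_succ_a k b) _); ring.
have [->|neq] := eqVneq k n; first by rewrite t_eq0 // subrr; ring.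
by rewrite !t_eq0 ?mulr0 //; lia.
Qed.

Lemma t_pred_nE n k : t n k =
  (n%:R - k%:R + 1) ^+ 2 * t n.+1 k / (2 * (n%:R + 1) * (2 * (n%:R - k%:R) + 1)).
Proof.
have n_ge0 : 0 <= n%:R :> rat := ler0n _ n.
have odd_neq0 : (2 * (n%:R - k%:R) + 1 : rat) != 0.
  by apply: contra (natr_odd_sub_even_neq0 _ n k) => /eqP e; apply/eqP; lra.
by rewrite -t_succ_n [_ * t n k]mulrC mulfK // !mulf_neq0 //; apply: lt0r_neq0; lra.
Qed.

Lemma t_succ_kE n k : t n k.+1 =
  - (2 * k%:R + 1) * (n%:R - k%:R) ^+ 2 * t n k
  / ((k%:R + 1) * (k%:R + 2) * (2 * (n%:R - k%:R) - 1)).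
Proof.
have k_ge0 : 0 <= k%:R :> rat := ler0n _ k.
have odd_neq0 : (2 * (n%:R - k%:R) - 1 : rat) != 0.
  by apply: contra (natr_odd_sub_even_neq0 _ k n) => /eqP e; apply/eqP; lra.
by rewrite -t_succ_k [_ * t n k.+1]mulrC mulfK // !mulf_neq0 //; apply: lt0r_neq0; lra.
Qed.

Definition recurrence_op (u : nat -> rat) (N : nat) : rat :=
  let x := (N.+2%:R : rat) in
  - 16 * (2 * x + 1) * (x - 1) ^+ 2 * u N
  - 4 * (2 * x ^+ 2 - 1) * u N.+1
  + (2 * x - 1) * (x + 1) ^+ 2 * u N.+2.

Definition certificate_poly (n k : nat) : rat :=
  let x := (n%:R : rat) in let y := (k%:R : rat) in
  y * (-2 * x + 5 * x ^+ 2 + 6 * x ^+ 3 - 8 * x ^+ 4)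
  + y ^+ 2 * (1 - 8 * x - x ^+ 2 + 18 * x ^+ 3 - 8 * x ^+ 4)
  + y ^+ 3 * (3 - 4 * x - 10 * x ^+ 2 + 12 * x ^+ 3)
  + y ^+ 4 * (2 + 2 * x - 4 * x ^+ 2).

Definition certificate (n k : nat) : rat :=
  t n k * certificate_poly n k / (n%:R ^+ 2 * (2 * (n%:R - k%:R) - 1)).

Lemma recurrence_op_t N k :
  recurrence_op (t^~ k) N = certificate N.+2 k.+1 - certificate N.+2 k.
Proof.
have N_ge0 : 0 <= N%:R :> rat := ler0n _ N.
have k_ge0 : 0 <= k%:R :> rat := ler0n _ k.
have odd1 := natr_odd_sub_even_neq0 rat N.+1 k.
have odd0 := natr_odd_sub_even_neq0 rat N k.
rewrite -[N.+1%:R]natr1 in odd1.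
rewrite /recurrence_op /certificate /certificate_poly.
rewrite (t_succ_kE N.+2 k) (t_pred_nE N k) (t_pred_nE N.+1 k) !mulrS.
field.
by repeat (apply/andP; split);
  first [ apply: lt0r_neq0; lra
        | apply: contra odd1 => /eqP e; apply/eqP; lra
        | apply: contra odd0 => /eqP e; apply/eqP; lra ].
Qed.

Lemma sum_recurrence_op_t N :
  \sum_(0 <= k < N.+3) recurrence_op (t^~ k) N = 0.
Proof.
rewrite (telescope_sumr_eq (certificate N.+2)) //; last first.
  by move=> k _; apply: recurrence_op_t.
by rewrite /certificate t_eq0 // /certificate_poly !(mul0r, expr0n, add0r, mulr0) oppr0.
Qed.

Theorem mainTheorem2 (n : nat) (hn : (2 <= n)%N) :
  - 16 * (2 * n%:Z + 1) * (n%:Z - 1) ^+ 2 * f (n - 2)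
  - 4 * (2 * n%:Z ^+ 2 - 1) * f (n - 1)
  + (2 * n%:Z - 1) * (n%:Z + 1) ^+ 2 * f n = 0.
Proof.
case: n hn => [|[|N]] // _; rewrite !subSS !subn0.
apply/eqP; rewrite -(intr_eq0 rat).
rewrite !(rmorphD, rmorphB, rmorphM, rmorphXn, rmorphN, rmorph1) /= -pmulrn.
rewrite (@f_ratE_widen N.+3 N) ?(@f_ratE_widen N.+3 N.+1) ?(@f_ratE_widen N.+3 N.+2); try lia.
have := sum_recurrence_op_t N.
rewrite /recurrence_op !big_split /= sumrN -!mulr_sumr => sum0.
by rewrite -[X in _ == X]sum0; apply/eqP; ring.
Qed.
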